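(* Consider the $n$-body problem in ${\bf S}^2$ with all masses equal to $m>0$, and let $\alpha_i=2\pi i/n$, $i=1,\dots,n$. If $n$ is odd, then for every $m>0$ and every $z\in(-1,1)$ there exist $\omega>0$ and $\omega<0$ such that ${\bf q}_i(t)=(r\cos(\omega t+\alpha_i), r\sin(\omega t+\alpha_i), z)$, $r=(1-z^2)^{1/2}$, $i=1,\dots,n$, is a solution of the equations of motion (an elliptic relative equilibrium in which the regular $n$-gon rotates in the plane $z=$ constant). If $n$ is even, the same holds for every $z\in(-1,0)\cup(0,1)$.
   Context: The $n$-body problem in ${\bf S}^2$: bodies of masses $m_1,\dots,m_n>0$ have positions ${\bf q}_i=(x_i,y_i,z_i)\in\mathbb R^3$ on the unit sphere ${\bf S}^2=\{{\bf q}:{\bf q}\cdot{\bf q}=1\}$ ($\cdot$ the Euclidean inner product), and satisfy $$\ddot{\bf q}_i=\sum_{j\ne i}\frac{m_j[{\bf q}_j-({\bf q}_i\cdot{\bf q}_j){\bf q}_i]}{[1-({\bf q}_i\cdot{\bf q}_j)^2]^{3/2}}-(\dot{\bf q}_i\cdot\dot{\bf q}_i){\bf q}_i,\qquad {\bf q}_i\cdot{\bf q}_i=1,\ \ {\bf q}_i\cdot\dot{\bf q}_i=0,$$ $i=1,\dots,n$, defined only for configurations with $({\bf q}_i\cdot{\bf q}_j)^2\ne 1$ for all $i\ne j$. *)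

From Stdlib Require Import Reals Lra List Arith.
Open Scope R_scope.

Record v3 : Type := mk3 { vx : R; vy : R; vz : R }.

Definition dot (a b : v3) : R := vx a * vx b + vy a * vy b + vz a * vz b.
Definition vadd (a b : v3) : v3 := mk3 (vx a + vx b) (vy a + vy b) (vz a + vz b).
Definition vscale (c : R) (a : v3) : v3 := mk3 (c * vx a) (c * vy a) (c * vz a).
Definition vsub (a b : v3) : v3 := vadd a (vscale (-1) b).
Definition vzero : v3 := mk3 0 0 0.

Definition has_deriv (f f' : R -> v3) : Prop :=
  forall t, derivable_pt_lim (fun s => vx (f s)) t (vx (f' t)) /\
            derivable_pt_lim (fun s => vy (f s)) t (vy (f' t)) /\
            derivable_pt_lim (fun s => vz (f s)) t (vz (f' t)).

(* Right-hand side of the equations of motion in S^2 for body i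
   (bodies indexed 1..n, masses mass j), given positions q and velocities qd. *)
Definition accel (n : nat) (mass : nat -> R) (q qd : nat -> R -> v3)
    (i : nat) (t : R) : v3 :=
  vsub
    (fold_right vadd vzero
      (map (fun j =>
         if Nat.eqb j i then vzero else
         vscale (mass j / (sqrt (1 - (dot (q i t) (q j t))^2)) ^ 3)
                (vsub (q j t) (vscale (dot (q i t) (q j t)) (q i t))))
       (seq 1 n)))
    (vscale (dot (qd i t) (qd i t)) (q i t)).

Definition is_solution (n : nat) (mass : nat -> R) (q : nat -> R -> v3) : Prop :=
  exists qd : nat -> R -> v3,
    forall i, (1 <= i <= n)%nat ->
      has_deriv (q i) (qd i) /\
      has_deriv (qd i) (fun t => accel n mass q qd i t) /\
      forall t, dot (q i t) (q i t) = 1 /\ dot (q i t) (qd i t) = 0 /\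
        (forall j, (1 <= j <= n)%nat -> j <> i -> (dot (q i t) (q j t))^2 <> 1).

Definition ngon_orbit (n : nat) (z w : R) (i : nat) (t : R) : v3 :=
  let r := sqrt (1 - z^2) in
  let a := 2 * PI * INR i / INR n in
  mk3 (r * cos (w * t + a)) (r * sin (w * t + a)) z.

Definition ngon_RE_both_signs (n : nat) (m z : R) : Prop :=
  (exists w, w > 0 /\ is_solution n (fun _ => m) (ngon_orbit n z w)) /\
  (exists w, w < 0 /\ is_solution n (fun _ => m) (ngon_orbit n z w)).

(* The attraction exerted on body i by body j, at angular gap d,
   splits into a component along a fixed "attraction" direction (weight
   radial_weight m r d) and one along the tangent of the circle (weight
   tangential_weight m r d).  Summed over j, rotation invariance of the n-gon
   makes both sums independent of i, and the mirror symmetry k <-> n - k of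
   the n-gon kills the tangential sum.  The equations of motion then reduce to
   the single scalar condition  w^2 = S, where S is the (positive) sum of the
   radial weights over the vertices, so w = +- sqrt S both work.  All of this
   needs only that no two bodies are antipodal; that holds for every height
   when n is odd, and off the equator when n is even. *)

From Stdlib Require Import Reals Arith Lra Lia Psatz List.
Open Scope R_scope.

Lemma v3_ext (a b : v3) : vx a = vx b -> vy a = vy b -> vz a = vz b -> a = b.
Proof. destruct a, b; simpl; intros -> -> ->; reflexivity. Qed.

Lemma has_deriv_ext (f f1 f2 : R -> v3) :
  has_deriv f f1 -> (forall t, f1 t = f2 t) -> has_deriv f f2.
Proof. intros Hf E t. rewrite <- E. apply Hf. Qed.

Lemma deriv_affine (w a t : R) : derivable_pt_lim (fun s => w * s + a) t w.
Proof.
  assert (H := derivable_pt_lim_plus (mult_real_fct w id) (fct_cte a) t (w * 1) 0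
                 (derivable_pt_lim_scal id w t 1 (derivable_pt_lim_id t))
                 (derivable_pt_lim_const a t)).
  replace (w * 1 + 0) with w in H by ring. exact H.
Qed.

Lemma deriv_scaled_cos (c w a t : R) :
  derivable_pt_lim (fun s => c * cos (w * s + a)) t (- (c * w) * sin (w * t + a)).
Proof.
  replace (- (c * w) * sin (w * t + a)) with (c * (- sin (w * t + a) * w)) by ring.
  apply derivable_pt_lim_scal.
  apply (derivable_pt_lim_comp (fun s => w * s + a) cos);
    [apply deriv_affine | apply derivable_pt_lim_cos].
Qed.

Lemma deriv_scaled_sin (c w a t : R) :
  derivable_pt_lim (fun s => c * sin (w * s + a)) t ((c * w) * cos (w * t + a)).
Proof.
  replace ((c * w) * cos (w * t + a)) with (c * (cos (w * t + a) * w)) by ring.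
  apply derivable_pt_lim_scal.
  apply (derivable_pt_lim_comp (fun s => w * s + a) sin);
    [apply deriv_affine | apply derivable_pt_lim_sin].
Qed.

Definition point (r z A : R) : v3 := mk3 (r * cos A) (r * sin A) z.

Definition circle (r z w a t : R) : v3 := point r z (w * t + a).
Definition circle_velocity (r w a t : R) : v3 :=
  mk3 (- (r * w) * sin (w * t + a)) ((r * w) * cos (w * t + a)) 0.
Definition circle_acceleration (r w a t : R) : v3 :=
  mk3 (- (r * w * w) * cos (w * t + a)) (- (r * w * w) * sin (w * t + a)) 0.

Lemma circle_has_deriv (r z w a : R) :
  has_deriv (circle r z w a) (circle_velocity r w a).
Proof.
  intros t; repeat split.
  - apply deriv_scaled_cos.
  - apply deriv_scaled_sin.
  - apply derivable_pt_lim_const.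
Qed.

Lemma circle_velocity_has_deriv (r w a : R) :
  has_deriv (circle_velocity r w a) (circle_acceleration r w a).
Proof.
  intros t; repeat split; simpl.
  - replace (- (r * w * w) * cos (w * t + a)) with ((- (r * w) * w) * cos (w * t + a))
      by ring.
    apply deriv_scaled_sin.
  - apply deriv_scaled_cos.
  - apply derivable_pt_lim_const.
Qed.

(* The squared speed of the rotation, needed for the term -(qd . qd) q. *)
Lemma circle_velocity_sq (r w a t : R) :
  dot (circle_velocity r w a t) (circle_velocity r w a t) = r * r * w * w.
Proof.
  unfold dot, circle_velocity; simpl.
  assert (H := sin2_cos2 (w * t + a)); unfold Rsqr in H.
  transitivity (r * r * w * w * (sin (w * t + a) * sin (w * t + a)
                                 + cos (w * t + a) * cos (w * t + a))); [ring|].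
  rewrite H; ring.
Qed.

Lemma circle_velocity_orthogonal (r z w a t : R) :
  dot (circle r z w a t) (circle_velocity r w a t) = 0.
Proof. unfold dot, circle, point, circle_velocity; simpl. ring. Qed.

Definition sumR (l : list R) : R := fold_right Rplus 0 l.

Lemma sumR_app (l1 l2 : list R) : sumR (l1 ++ l2) = sumR l1 + sumR l2.
Proof. induction l1 as [|x l1 IH]; simpl; [ring | unfold sumR in *; simpl; rewrite IH; ring]. Qed.

Lemma sumR_opp {A : Type} (f : A -> R) (l : list A) :
  sumR (map (fun x => - f x) l) = - sumR (map f l).
Proof. induction l as [|x l IH]; unfold sumR in *; simpl; [ring | rewrite IH; ring]. Qed.

Lemma sumR_pos {A : Type} (f : A -> R) (l : list A) :
  (forall x, In x l -> 0 < f x) -> l <> nil -> 0 < sumR (map f l).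
Proof.
  induction l as [|x l IH]; intros Hpos Hne; [congruence|].
  unfold sumR in *; simpl.
  assert (0 < f x) by (apply Hpos; left; reflexivity).
  destruct l as [|y l]; simpl in *; [lra|].
  assert (0 < f y + fold_right Rplus 0 (map f l)).
  { apply IH; [intros u Hu; apply Hpos; right; exact Hu | discriminate]. }
  lra.
Qed.

Lemma map_seq_shift {A : Type} (F : nat -> A) (s c len : nat) :
  map F (seq (s + c) len) = map (fun k => F (k + c)%nat) (seq s len).
Proof.
  revert s; induction len as [|len IH]; intros s; simpl; [reflexivity|].
  f_equal. replace (S (s + c)) with (S s + c)%nat by lia. apply IH.
Qed.

Lemma sumR_reverse (len : nat) (f : nat -> R) :
  sumR (map f (seq 1 len)) = sumR (map (fun k => f (S len - k)%nat) (seq 1 len)).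
Proof.
  revert f; induction len as [|len IH]; intros f; [reflexivity|].
  change (seq 1 (S len)) with (1%nat :: seq (1 + 1) len) at 2.
  rewrite map_cons, (map_seq_shift _ 1 1 len).
  rewrite seq_S, map_app, sumR_app, IH.
  replace (map (fun k => f (S (S len) - (k + 1))%nat) (seq 1 len))
    with (map (fun k => f (S len - k)%nat) (seq 1 len))
    by (apply map_ext; intros k; f_equal; lia).
  replace (S (S len) - 1)%nat with (1 + len)%nat by lia.
  unfold sumR; simpl; ring.
Qed.

Definition ngon_angle (n k : nat) : R := 2 * PI * INR k / INR n.

Definition offdiag_sum (i : nat) (l : list nat) (f : nat -> R) : R :=
  sumR (map (fun j => if Nat.eqb j i then 0 else f j) l).

Definition sum_over_others (n i : nat) (h : R -> R) : R :=
  offdiag_sum i (seq 1 n) (fun j => h (ngon_angle n j - ngon_angle n i)).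

Definition sum_over_vertices (n : nat) (h : R -> R) : R :=
  sumR (map (fun k => h (ngon_angle n k)) (seq 1 (n - 1))).

(* The symmetric sums below are only invariant for 2 pi-periodic summands. *)
Definition periodic_2PI (h : R -> R) : Prop := forall x, h (x + 2 * PI) = h x.

(* Rotation invariance: seen from any vertex, the gaps to the other vertices
   are the vertex angles, up to full turns. *)
Lemma sum_over_others_rotation (n i : nat) (h : R -> R) :
  (1 <= i <= n)%nat -> periodic_2PI h -> sum_over_others n i h = sum_over_vertices n h.
Proof.
  intros Hi Hper. unfold sum_over_others, offdiag_sum, sum_over_vertices.
  assert (Hn : INR n <> 0) by (apply not_0_INR; lia).
  assert (Split_n : seq 1 n = seq 1 (i - 1) ++ i :: seq (1 + i) (n - i)).
  { replace n with ((i - 1) + S (n - i))%nat at 1 by lia.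
    rewrite seq_app. replace (1 + (i - 1))%nat with i by lia. reflexivity. }
  assert (Split_n1 : seq 1 (n - 1) = seq 1 (n - i) ++ seq (1 + (n - i)) (i - 1)).
  { rewrite <- seq_app. f_equal. lia. }
  rewrite Split_n, Split_n1, !map_app, !sumR_app, map_cons, Nat.eqb_refl.
  rewrite (map_seq_shift _ 1 (n - i) (i - 1)), (map_seq_shift _ 1 i (n - i)).
  (* The vertices after i: gap to vertex i + k is the angle of vertex k. *)
  replace (map (fun k => if (k + i =? i)%nat then 0
                         else h (ngon_angle n (k + i) - ngon_angle n i)) (seq 1 (n - i)))
    with (map (fun k => h (ngon_angle n k)) (seq 1 (n - i))).
  2:{ apply map_ext_in. intros k Hk. apply in_seq in Hk.
      destruct (Nat.eqb_spec (k + i) i); [lia|].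
      f_equal. unfold ngon_angle. rewrite plus_INR. field. exact Hn. }
  (* The vertices before i: the gap wraps around by one full turn. *)
  replace (map (fun j => if (j =? i)%nat then 0
                         else h (ngon_angle n j - ngon_angle n i)) (seq 1 (i - 1)))
    with (map (fun k => h (ngon_angle n (k + (n - i)))) (seq 1 (i - 1))).
  2:{ apply map_ext_in. intros j Hj. apply in_seq in Hj.
      destruct (Nat.eqb_spec j i); [lia|].
      rewrite <- (Hper (ngon_angle n j - ngon_angle n i)). f_equal. unfold ngon_angle.
      rewrite plus_INR, minus_INR by lia. field. exact Hn. }
  unfold sumR; simpl; ring.
Qed.

(* The vertex sum of a periodic odd function vanishes: vertices k and n - k
   are mirror images. *)
Lemma sum_over_vertices_odd (n : nat) (h : R -> R) :
  (1 <= n)%nat -> periodic_2PI h -> (forall x, h (- x) = - h x) ->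
  sum_over_vertices n h = 0.
Proof.
  intros Hn Hper Hodd. unfold sum_over_vertices.
  assert (HnR : INR n <> 0) by (apply not_0_INR; lia).
  assert (E := sumR_reverse (n - 1) (fun k => h (ngon_angle n k))); cbv beta in E.
  replace (map (fun k => h (ngon_angle n (S (n - 1) - k))) (seq 1 (n - 1)))
    with (map (fun k => - h (ngon_angle n k)) (seq 1 (n - 1))) in E.
  2:{ apply map_ext_in. intros k Hk. apply in_seq in Hk.
      rewrite <- Hodd, <- Hper. f_equal. unfold ngon_angle.
      rewrite minus_INR by lia. replace (S (n - 1)) with n by lia. field. exact HnR. }
  rewrite sumR_opp in E. lra.
Qed.

Lemma ngon_angle_half (n k : nat) : (1 <= k <= n - 1)%nat ->
  exists a, ngon_angle n k = 2 * a /\ 0 < a < PI /\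
            ((2 * k < n)%nat -> a < PI / 2) /\ ((n < 2 * k)%nat -> PI / 2 < a).
Proof.
  intros Hk.
  assert (Hn : 0 < INR n) by (apply lt_0_INR; lia).
  assert (Hk1 : 1 <= INR k) by (apply (le_INR 1); lia).
  assert (Hkn : INR k < INR n) by (apply lt_INR; lia).
  assert (HPI := PI_RGT_0).
  set (u := INR k / INR n).
  assert (Hu : u * INR n = INR k) by (unfold u; field; lra).
  exists (PI * u). split; [unfold ngon_angle, u; field; lra|].
  assert (0 < u) by nra. assert (u < 1) by nra.
  split; [split; nra|]. split.
  - intros Hq. apply lt_INR in Hq. rewrite mult_INR in Hq. simpl in Hq. nra.
  - intros Hq. apply lt_INR in Hq. rewrite mult_INR in Hq. simpl in Hq. nra.
Qed.

Lemma cos_ngon_angle_lt_1 (n k : nat) : (1 <= k <= n - 1)%nat -> cos (ngon_angle n k) < 1.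
Proof.
  intros Hk. destruct (ngon_angle_half n k Hk) as [a [-> [Ha _]]].
  rewrite cos_2a_sin. assert (0 < sin a) by (apply sin_gt_0; lra). nra.
Qed.

Lemma cos_ngon_angle_gt_m1 (n k : nat) :
  Nat.odd n = true -> (1 <= k <= n - 1)%nat -> -1 < cos (ngon_angle n k).
Proof.
  intros Hodd Hk. destruct (ngon_angle_half n k Hk) as [a [-> [Ha [Hlt Hgt]]]].
  rewrite cos_2a_cos.
  assert (cos a <> 0).
  { destruct (lt_eq_lt_dec (2 * k) n) as [[L|L]|L].
    - assert (0 < cos a) by (apply cos_gt_0; specialize (Hlt L); lra). lra.
    - subst n. rewrite Nat.odd_mul in Hodd. discriminate.
    - assert (cos a < 0) by (apply cos_lt_0; specialize (Hgt L); lra). lra. }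
  assert (0 < cos a * cos a) by (apply Rsqr_pos_lt; assumption). lra.
Qed.

Lemma cos_ngon_gap (n i j : nat) :
  (1 <= i <= n)%nat -> (1 <= j <= n)%nat -> i <> j ->
  exists k, (1 <= k <= n - 1)%nat /\ cos (ngon_angle n j - ngon_angle n i) = cos (ngon_angle n k).
Proof.
  intros Hi Hj Hij.
  assert (Hn : INR n <> 0) by (apply not_0_INR; lia).
  destruct (Nat.lt_gt_cases i j) as [[L|L] _]; [exact Hij| |].
  - exists (j - i)%nat. split; [lia|]. f_equal. unfold ngon_angle.
    rewrite minus_INR by lia. field. exact Hn.
  - exists (i - j)%nat. split; [lia|]. rewrite <- cos_neg. f_equal. unfold ngon_angle.
    rewrite minus_INR by lia. field. exact Hn.
Qed.

(* Two bodies at height z (radius r, r^2 + z^2 = 1) whose longitudes differ by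
   d have inner product chord_cos r d; the pull of a body of mass m on the
   other has magnitude factor coef m r d = m / (1 - (q_i . q_j)^2)^(3/2).
   The force on a body at longitude A then splits as
   radial_weight * attraction_dir + tangential_weight * tangent_dir. *)
Definition chord_cos (r d : R) : R := r * r * cos d + (1 - r * r).
Definition coef (m r d : R) : R := m / (sqrt (1 - chord_cos r d ^ 2)) ^ 3.
Definition radial_weight (m r d : R) : R := coef m r d * (1 - cos d).
Definition tangential_weight (m r d : R) : R := coef m r d * sin d.
Definition attraction_dir (r z A : R) : v3 :=
  mk3 (- (r * (1 - r * r)) * cos A) (- (r * (1 - r * r)) * sin A) (z * r * r).
Definition tangent_dir (r A : R) : v3 := mk3 (- r * sin A) (r * cos A) 0.

Lemma point_dot (r z A B : R) :
  r * r = 1 - z ^ 2 -> dot (point r z A) (point r z B) = chord_cos r (B - A).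
Proof.
  intros Hr. unfold dot, point, chord_cos; simpl.
  rewrite cos_minus. replace (z * z) with (1 - r * r) by (rewrite Hr; ring). ring.
Qed.

Lemma pair_force (m r z A d : R) :
  r * r = 1 - z ^ 2 ->
  let P := point r z A in let Q := point r z (A + d) in
  vscale (m / (sqrt (1 - dot P Q ^ 2)) ^ 3) (vsub Q (vscale (dot P Q) P)) =
  vadd (vscale (radial_weight m r d) (attraction_dir r z A))
       (vscale (tangential_weight m r d) (tangent_dir r A)).
Proof.
  intros Hr P Q. unfold P, Q. rewrite point_dot by exact Hr.
  replace (A + d - A) with d by ring.
  unfold radial_weight, tangential_weight, coef.
  set (K := m / sqrt (1 - chord_cos r d ^ 2) ^ 3).
  unfold chord_cos, point, attraction_dir, tangent_dir.
  apply v3_ext; simpl; rewrite ?cos_plus, ?sin_plus; ring.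
Qed.

Lemma fold_offdiag_linear (i : nat) (l : list nat) (F : nat -> v3) (f g : nat -> R) (U V : v3) :
  (forall j, j <> i -> F j = vadd (vscale (f j) U) (vscale (g j) V)) ->
  fold_right vadd vzero (map (fun j => if Nat.eqb j i then vzero else F j) l) =
  vadd (vscale (offdiag_sum i l f) U) (vscale (offdiag_sum i l g) V).
Proof.
  intros HF. unfold offdiag_sum, sumR.
  induction l as [|j l IH]; simpl.
  - apply v3_ext; simpl; ring.
  - rewrite IH. destruct (Nat.eqb_spec j i) as [_|Hji].
    + apply v3_ext; simpl; ring.
    + rewrite (HF j Hji). apply v3_ext; simpl; ring.
Qed.

Lemma cos_plus_2PI (x : R) : cos (x + 2 * PI) = cos x.
Proof. rewrite cos_plus, cos_2PI, sin_2PI. ring. Qed.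

Lemma sin_plus_2PI (x : R) : sin (x + 2 * PI) = sin x.
Proof. rewrite sin_plus, cos_2PI, sin_2PI. ring. Qed.

Lemma radial_weight_periodic (m r : R) : periodic_2PI (radial_weight m r).
Proof. intros x. unfold radial_weight, coef, chord_cos. rewrite cos_plus_2PI. reflexivity. Qed.

Lemma tangential_weight_periodic (m r : R) : periodic_2PI (tangential_weight m r).
Proof.
  intros x. unfold tangential_weight, coef, chord_cos.
  rewrite cos_plus_2PI, sin_plus_2PI. reflexivity.
Qed.

Lemma tangential_weight_odd (m r x : R) : tangential_weight m r (- x) = - tangential_weight m r x.
Proof. unfold tangential_weight, coef, chord_cos. rewrite cos_neg, sin_neg. ring. Qed.

Lemma radial_weight_pos (m r d : R) :
  m > 0 -> -1 < chord_cos r d < 1 -> cos d < 1 -> 0 < radial_weight m r d.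
Proof.
  intros Hm Hc Hcos. unfold radial_weight, coef.
  assert (0 < 1 - chord_cos r d ^ 2) by nra.
  assert (0 < sqrt (1 - chord_cos r d ^ 2) ^ 3) by (apply pow_lt, sqrt_lt_R0; assumption).
  apply Rmult_lt_0_compat; [apply Rdiv_lt_0_compat|]; lra.
Qed.

Lemma chord_cos_bounds (r z d : R) :
  r * r = 1 - z ^ 2 -> -1 < z < 1 -> cos d < 1 -> (1 - z ^ 2) * (1 - cos d) < 2 ->
  -1 < chord_cos r d < 1.
Proof.
  intros Hr Hz Hcos Hfar. unfold chord_cos. rewrite Hr.
  assert (0 < 1 - z ^ 2) by nra.
  split; nra.
Qed.

Definition ngon_velocity (n : nat) (z w : R) (i : nat) : R -> v3 :=
  circle_velocity (sqrt (1 - z ^ 2)) w (ngon_angle n i).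

Lemma ngon_orbit_point (n : nat) (z w : R) (i : nat) (t : R) :
  ngon_orbit n z w i t = point (sqrt (1 - z ^ 2)) z (w * t + ngon_angle n i).
Proof. reflexivity. Qed.

Lemma sqrt_1_minus_sq (z : R) : -1 < z < 1 -> sqrt (1 - z ^ 2) * sqrt (1 - z ^ 2) = 1 - z ^ 2.
Proof. intros Hz. apply sqrt_sqrt. nra. Qed.

Lemma ngon_accel (n : nat) (m z w : R) (i : nat) (t : R) :
  -1 < z < 1 ->
  let r := sqrt (1 - z ^ 2) in let A := w * t + ngon_angle n i in
  accel n (fun _ => m) (ngon_orbit n z w) (ngon_velocity n z w) i t =
  vsub (vadd (vscale (sum_over_others n i (radial_weight m r)) (attraction_dir r z A))
             (vscale (sum_over_others n i (tangential_weight m r)) (tangent_dir r A)))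
       (vscale (r * r * w * w) (ngon_orbit n z w i t)).
Proof.
  intros Hz r A. unfold accel.
  rewrite (fold_offdiag_linear i (seq 1 n) _
             (fun j => radial_weight m r (ngon_angle n j - ngon_angle n i))
             (fun j => tangential_weight m r (ngon_angle n j - ngon_angle n i))
             (attraction_dir r z A) (tangent_dir r A)).
  - unfold ngon_velocity. rewrite circle_velocity_sq. reflexivity.
  - intros j _. rewrite !ngon_orbit_point. fold r.
    replace (w * t + ngon_angle n j) with (A + (ngon_angle n j - ngon_angle n i))
      by (unfold A; ring).
    apply pair_force, sqrt_1_minus_sq, Hz.
Qed.

(* Nondegeneracy: no two vertices of the n-gon at height z are antipodal, i.e.
   q_i . q_j = 1 - (1 - z^2) (1 - cos (alpha_j - alpha_i)) stays above -1. *)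
Definition no_antipodal_vertices (n : nat) (z : R) : Prop :=
  forall k, (1 <= k <= n - 1)%nat -> (1 - z ^ 2) * (1 - cos (ngon_angle n k)) < 2.

Lemma vertex_chord_bounds (n : nat) (z : R) (k : nat) :
  -1 < z < 1 -> no_antipodal_vertices n z -> (1 <= k <= n - 1)%nat ->
  -1 < chord_cos (sqrt (1 - z ^ 2)) (ngon_angle n k) < 1.
Proof.
  intros Hz Hfar Hk.
  apply (chord_cos_bounds _ z); auto using sqrt_1_minus_sq, cos_ngon_angle_lt_1.
Qed.

(* The tangential sum
   vanishes by mirror symmetry and the radial sum is the same for every body. *)
Lemma ngon_is_solution (n : nat) (m z w : R) :
  -1 < z < 1 -> no_antipodal_vertices n z ->
  w * w = sum_over_vertices n (radial_weight m (sqrt (1 - z ^ 2))) ->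
  is_solution n (fun _ => m) (ngon_orbit n z w).
Proof.
  intros Hz Hfar Hw.
  assert (Hr := sqrt_1_minus_sq z Hz). set (r := sqrt (1 - z ^ 2)) in *.
  exists (ngon_velocity n z w). intros i Hi.
  assert (Erad : sum_over_others n i (radial_weight m r) = w * w).
  { rewrite Hw. apply sum_over_others_rotation; [exact Hi | apply radial_weight_periodic]. }
  assert (Etan : sum_over_others n i (tangential_weight m r) = 0).
  { rewrite sum_over_others_rotation; [|exact Hi | apply tangential_weight_periodic].
    apply sum_over_vertices_odd;
      [lia | apply tangential_weight_periodic | apply tangential_weight_odd]. }
  split; [|split].
  - apply circle_has_deriv.
  - apply (has_deriv_ext _ _ _ (circle_velocity_has_deriv r w (ngon_angle n i))).
    intros t. rewrite ngon_accel, ngon_orbit_point by exact Hz. fold r.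
    rewrite Erad, Etan. apply v3_ext; simpl; ring.
  - intros t. split; [|split].
    + rewrite ngon_orbit_point, point_dot by exact Hr.
      unfold chord_cos. rewrite Rminus_diag, cos_0. ring.
    + apply circle_velocity_orthogonal.
    + intros j Hj Hji. rewrite !ngon_orbit_point, point_dot by exact Hr. fold r.
      replace (w * t + ngon_angle n j - (w * t + ngon_angle n i))
        with (ngon_angle n j - ngon_angle n i) by ring.
      destruct (cos_ngon_gap n i j Hi Hj (not_eq_sym Hji)) as [k [Hk Ek]].
      assert (Hb := vertex_chord_bounds n z k Hz Hfar Hk). fold r in Hb.
      replace (chord_cos r (ngon_angle n j - ngon_angle n i))
        with (chord_cos r (ngon_angle n k)) by (unfold chord_cos; rewrite Ek; reflexivity).
      intros Hsq. nra.
Qed.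

Lemma radial_sum_pos (n : nat) (m z : R) :
  (2 <= n)%nat -> m > 0 -> -1 < z < 1 -> no_antipodal_vertices n z ->
  0 < sum_over_vertices n (radial_weight m (sqrt (1 - z ^ 2))).
Proof.
  intros Hn Hm Hz Hfar. unfold sum_over_vertices. apply sumR_pos.
  - intros k Hk. apply in_seq in Hk.
    assert (Hk' : (1 <= k <= n - 1)%nat) by lia.
    apply radial_weight_pos;
      [exact Hm | apply vertex_chord_bounds; assumption | apply cos_ngon_angle_lt_1, Hk'].
  - destruct n as [|[|n]]; [lia | lia | discriminate].
Qed.

Lemma ngon_RE_of_no_antipodal (n : nat) (m z : R) :
  (2 <= n)%nat -> m > 0 -> -1 < z < 1 -> no_antipodal_vertices n z ->
  ngon_RE_both_signs n m z.
Proof.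
  intros Hn Hm Hz Hfar.
  assert (HS := radial_sum_pos n m z Hn Hm Hz Hfar).
  set (S := sum_over_vertices n (radial_weight m (sqrt (1 - z ^ 2)))) in *.
  assert (Hsqrt_pos := sqrt_lt_R0 S HS).
  assert (Hsqrt_sq := sqrt_sqrt S (Rlt_le _ _ HS)).
  split.
  - exists (sqrt S). split; [lra|]. apply ngon_is_solution; auto.
  - exists (- sqrt S). split; [lra|]. apply ngon_is_solution; auto. fold S. lra.
Qed.

(* For odd n no vertex angle is pi, so nondegeneracy holds at every height. *)
Lemma no_antipodal_odd (n : nat) (z : R) :
  Nat.odd n = true -> -1 < z < 1 -> no_antipodal_vertices n z.
Proof.
  intros Hodd Hz k Hk.
  assert (Hlo := cos_ngon_angle_gt_m1 n k Hodd Hk).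
  assert (Hhi := cos_ngon_angle_lt_1 n k Hk).
  assert (0 <= z ^ 2) by nra. nra.
Qed.

(* Off the equator the circle has radius < 1, so no two points on it are
   antipodal, whatever n. *)
Lemma no_antipodal_off_equator (n : nat) (z : R) :
  z <> 0 -> -1 < z < 1 -> no_antipodal_vertices n z.
Proof.
  intros Hz0 Hz k Hk.
  assert (Hcos := COS_bound (ngon_angle n k)).
  assert (0 < z * z) by (apply Rsqr_pos_lt, Hz0).
  assert (0 < 1 - z ^ 2) by nra. nra.
Qed.

Theorem mainTheorem7 (n : nat) (m : R) :
  (2 <= n)%nat -> m > 0 ->
  (Nat.odd n = true ->
     forall z, -1 < z < 1 -> ngon_RE_both_signs n m z) /\
  (Nat.even n = true ->
     forall z, (-1 < z < 0 \/ 0 < z < 1) -> ngon_RE_both_signs n m z).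
Proof.
  intros Hn Hm. split.
  - intros Hodd z Hz.
    apply ngon_RE_of_no_antipodal; auto using no_antipodal_odd.
  - intros _ z Hz.
    assert (Hz1 : -1 < z < 1) by lra.
    apply ngon_RE_of_no_antipodal; auto.
    apply no_antipodal_off_equator; [lra | exact Hz1].
Qed.
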